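(* Setup: - Let $(X_t)_{t\ge0}$ be real random variables adapted to a filtration $(\mathcal F_t)_{t\ge0}$. - Let $\tau$ be a stopping time with respect to $(\mathcal F_t)$. - Let $D,s\ge0$ and $R\in\mathbb R$. Assume that for every $t\ge1$, conditioned on $\mathcal F_{t-1}$: - (C1) $\mathbf 1_{\tau>t-1}\,(\mathbb E[X_t\mid\mathcal F_{t-1}]-X_{t-1}-R)\le0$; - (C2) $\mathbf 1_{\tau>t-1}(X_t-X_{t-1}-R)$ satisfies the one-sided $(D,s)$-Bernstein condition. For $h>0$ define - $\tau_X^+=\inf\{t\ge0:X_t\ge X_0+h\}$, - $\tau_X^-=\inf\{t\ge0:X_t\le X_0-h\}$. Then: (i) If $R\ge0$, then for any $h,T>0$ with $z:=h-RT>0$, $$\Pr[\tau_X^+\le\min\{T,\tau\}]\le\exp\Big(-\frac{z^2/2}{sT+zD/3}\Big).$$ (ii) If $R<0$, then for any $h,T>0$ with $z:=(-R)T-h>0$, $$\Pr[\min\{\tau_X^-,\tau\}>T]\le\exp\Big(-\frac{z^2/2}{sT+zD/3}\Big).$$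
   Context: **Bernstein conditions.** Let $D,s\ge0$. - A real random variable $X$ satisfies the $(D,s)$-Bernstein condition if $\mathbb E[e^{\lambda X}]\le\exp\big(\frac{\lambda^2 s/2}{1-|\lambda|D/3}\big)$ for all $\lambda\in\mathbb R$ with $|\lambda|D<3$. - It satisfies the one-sided $(D,s)$-Bernstein condition if the same inequality holds for all $\lambda\ge0$ with $\lambda D<3$. - A random variable ''conditioned on $\mathcal F_{t-1}$'' satisfies such a condition if the inequality holds with $\mathbb E[\cdot\mid\mathcal F_{t-1}]$ in place of $\mathbb E$, almost surely. *)

From mathcomp Require Import all_boot all_order all_algebra.
From mathcomp Require Import all_classical all_reals all_analysis.
Set Implicit Arguments. Unset Strict Implicit. Unset Printing Implicit Defensive.
Import Order.TTheory GRing.Theory Num.Theory.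
Local Open Scope classical_set_scope.
Local Open Scope ring_scope.

Definition sub_sigma_algebra d (T : measurableType d) (G : set (set T)) :=
  sigma_algebra setT G /\ G `<=` measurable.

Definition G_measurable d (T : measurableType d) (R : realType)
    (G : set (set T)) (g : T -> R) :=
  forall B : set R, measurable B -> G (g @^-1` B).

Definition cond_exp_version d (T : measurableType d) (R : realType)
    (P : probability T R) (G : set (set T)) (Y g : T -> R) :=
  [/\ G_measurable G g,
      P.-integrable setT (EFin \o g),
      P.-integrable setT (EFin \o Y) &
      forall A, G A ->
        (\int[P]_(x in A) (g x)%:E = \int[P]_(x in A) (Y x)%:E)%E].

Definition filtration d (T : measurableType d) (F : nat -> set (set T)) :=
  (forall t, sub_sigma_algebra (F t)) /\ (forall s t, (s <= t)%N -> F s `<=` F t).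

Definition adapted d (T : measurableType d) (R : realType)
    (F : nat -> set (set T)) (X : nat -> T -> R) :=
  forall t, G_measurable (F t) (X t).

(* Random times with values in nat \cup {+oo}: None stands for +oo. *)
Definition tlt (t : nat) (o : option nat) : bool :=
  if o is Some n then (t < n)%N else true.
Definition tle (t : nat) (o : option nat) : bool :=
  if o is Some n then (t <= n)%N else true.

Definition stopping_time d (T : measurableType d)
    (F : nat -> set (set T)) (tau : T -> option nat) :=
  forall t, F t [set w | ~~ tlt t (tau w)].

Definition cond_bernstein_onesided d (T : measurableType d) (R : realType)
    (P : probability T R) (G : set (set T)) (D s : R) (Y : T -> R) :=
  forall lam : R, 0 <= lam -> lam * D < 3 ->
    exists g, cond_exp_version P G (fun w => expR (lam * Y w)) g /\
      {ae P, forall w, g w <= expR ((lam ^+ 2 * s / 2) / (1 - lam * D / 3))}.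

From Pilot Require Import Defs.
From mathcomp Require Import all_boot all_order all_algebra.
From mathcomp Require Import all_classical all_reals all_analysis.
From mathcomp Require Import ring lra.
Import measurable_realfun.
Import Order.TTheory GRing.Theory Num.Theory.
Set Implicit Arguments. Unset Strict Implicit. Unset Printing Implicit Defensive.
Local Open Scope classical_set_scope.
Local Open Scope ring_scope.

(* Freedman's argument for the increments [Y_u = 1_{tau > u} (X_{u+1} - X_u - R)].
   Conditioning one step at a time, the Bernstein bound
   [E[exp(lam Y_u) | F_u] <= exp psi] gives [E[exp(lam S_T)] <= exp(T psi)] for
   every gated sum [S_T = sum_{u<T} 1_{A_u} Y_u] with predictable gates [A_u in F_u].
   Markov's inequality with [lam = z / (sT + zD/3)] then bounds [P[S_T >= z]] by
   [exp(-(z^2/2) / (sT + zD/3))].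
   In (ii) no gate is needed: on the event, [S_T = X_T - X_0 - RT > -h - RT = z].
   In (i) the gate closes as soon as the ungated sum reaches [z]; at the crossing
   time [t <= min(T, tau)] the ungated sum is [X_t - X_0 - Rt >= h - RT = z], so
   [S_T >= z] on the event. *)

Section sub_sigma_algebra.
Context d (Om : measurableType d) (R : realType).

Lemma G_measurable_sub (G H : set (set Om)) (f : Om -> R) :
  G `<=` H -> G_measurable G f -> G_measurable H f.
Proof. by move=> GH Gf B mB; exact/GH/Gf. Qed.

Variable G : set (set Om).
Hypothesis hG : Defs.sub_sigma_algebra G.

Lemma sub_sigma_algebra_measurable (A : set Om) : G A -> measurable A.
Proof. exact: hG.2. Qed.

Lemma g_sigma_measurableE :
  (measurable : set (set (g_sigma_algebraType G))) = G.
Proof. exact: measurable_g_measurableTypeE hG.1. Qed.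

Lemma sub_sigma_algebraT : G setT.
Proof. by rewrite -g_sigma_measurableE; exact: measurableT. Qed.

Lemma sub_sigma_algebraI (A B : set Om) : G A -> G B -> G (A `&` B).
Proof. by rewrite -g_sigma_measurableE; exact: measurableI. Qed.

Lemma G_measurableP (f : Om -> R) :
  G_measurable G f <-> measurable_fun (setT : set (g_sigma_algebraType G)) f.
Proof.
rewrite /G_measurable /measurable_fun g_sigma_measurableE.
by split=> [Gf _ B /Gf|mf B /(mf sub_sigma_algebraT)]; rewrite setTI.
Qed.

Lemma G_measurable_measurable_fun (f : Om -> R) :
  G_measurable G f -> measurable_fun setT f.
Proof. by move=> Gf _ B mB; rewrite setTI; exact/hG.2/Gf. Qed.

Lemma G_measurable_cst (r : R) : G_measurable G (cst r).
Proof. exact/G_measurableP/measurable_cst. Qed.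

Lemma G_measurable_indic (A : set Om) : G A -> G_measurable G (\1_A : Om -> R).
Proof.
by move=> GA; apply/G_measurableP/measurable_indic; rewrite g_sigma_measurableE.
Qed.

Lemma G_measurableD (f g : Om -> R) :
  G_measurable G f -> G_measurable G g -> G_measurable G (f \+ g).
Proof.
by move=> /G_measurableP mf /G_measurableP mg; exact/G_measurableP/measurable_funD.
Qed.

Lemma G_measurableB (f g : Om -> R) :
  G_measurable G f -> G_measurable G g -> G_measurable G (f \- g).
Proof.
by move=> /G_measurableP mf /G_measurableP mg; exact/G_measurableP/measurable_funB.
Qed.

Lemma G_measurableM (f g : Om -> R) :
  G_measurable G f -> G_measurable G g -> G_measurable G (f \* g).
Proof.
by move=> /G_measurableP mf /G_measurableP mg; exact/G_measurableP/measurable_funM.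
Qed.

Lemma G_measurable_expR (f : Om -> R) :
  G_measurable G f -> G_measurable G (fun x => expR (f x)).
Proof.
move=> /G_measurableP mf; apply/G_measurableP.
by apply: measurableT_comp; [exact: measurable_expR | exact: mf].
Qed.

End sub_sigma_algebra.

Section cond_mean_le.
Context d (Om : measurableType d) (R : realType) (mu : {measure set Om -> \bar R}).

(* Integrated form of E[V | G] <= c. *)
Definition cond_mean_le (G : set (set Om)) (V : Om -> R) (c : R) :=
  forall B, G B -> (\int[mu]_(x in B) (V x)%:E <= c%:E * mu B)%E.

Lemma integral_ae_le_cst (B : set Om) (g : Om -> R) (c : R) :
  measurable B -> 0 <= c -> measurable_fun setT g ->
  {ae mu, forall w, g w <= c} ->
  (\int[mu]_(x in B) (g x)%:E <= c%:E * mu B)%E.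
Proof.
move=> mB c0 mg gc.
rewrite integralE -integral_cst//.
apply: (@le_trans _ _ (\int[mu]_(x in B) (EFin \o g)^\+ x)%E).
  rewrite -[leRHS]adde0 leeD// oppe_le0.
  by apply: integral_ge0 => x _; exact: funeneg_ge0.
apply: ae_ge0_le_integral => //.
- apply/measurable_funepos/measurable_EFinP.
  exact: measurable_funS measurableT (@subsetT _ B) mg.
- apply: filterS gc => x gxc _ /=.
  by rewrite funeposE /= ge_max !lee_fin gxc c0.
Qed.

Lemma integral_indicM (B : set Om) (V : Om -> R) :
  (\int[mu]_x (\1_B x * V x)%:E = \int[mu]_(x in B) (V x)%:E)%E.
Proof.
rewrite [RHS]integral_mkcond; apply: eq_integral => x _.
by rewrite patchE indicE; case: (x \in B); rewrite /= ?mul1r ?mul0r.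
Qed.

Variables (G : set (set Om)) (V : Om -> R) (c : R).
Hypotheses (hG : Defs.sub_sigma_algebra G) (c0 : 0 <= c).
Hypotheses (V0 : forall x, 0 <= V x) (mV : measurable_fun setT V).
Hypothesis hV : cond_mean_le G V c.

Lemma cond_mean_le_indic (a : R) (B : set Om) : 0 <= a -> G B ->
  (\int[mu]_x (a * \1_B x * V x)%:E <= c%:E * \int[mu]_x (a * \1_B x)%:E)%E.
Proof.
move=> a0 GB; have mB := sub_sigma_algebra_measurable hG GB.
have mBf : measurable_fun setT (\1_B : Om -> R) by exact: measurable_indic.
under eq_integral do rewrite -mulrA EFinM.
under [X in (_ <= _ * X)%E]eq_integral do rewrite EFinM.
rewrite !ge0_integralZl_EFin//.
- by rewrite integral_indicM integral_indic// setIT muleCA lee_wpmul2l ?lee_fin ?hV.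
- exact/measurable_EFinP.
- by move=> x _; rewrite lee_fin mulr_ge0.
- exact/measurable_EFinP/measurable_funM.
Qed.

Lemma cond_mean_le_sum_indic (I : Type) (s : seq I) (a : I -> R) (A : I -> set Om) :
  (forall i, 0 <= a i) -> (forall i, G (A i)) ->
  (\int[mu]_x ((\sum_(i <- s) a i * \1_(A i) x) * V x)%:E
     <= c%:E * \int[mu]_x (\sum_(i <- s) a i * \1_(A i) x)%:E)%E.
Proof.
move=> a0 GA.
have mA i : measurable_fun setT (\1_(A i) : Om -> R).
  exact/measurable_indic/(sub_sigma_algebra_measurable hG).
have msum r : measurable_fun setT (fun x => \sum_(i <- r) a i * \1_(A i) x).
  by apply: measurable_sum => i; exact: measurable_funM.
have sum0 r x : 0 <= \sum_(i <- r) a i * \1_(A i) x.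
  by apply: sumr_ge0 => i _; rewrite mulr_ge0.
elim: s => [|i s IH].
  under eq_integral do rewrite big_nil mul0r.
  under [X in (_ <= _ * X)%E]eq_integral do rewrite big_nil.
  by rewrite integral0 mule0.
under eq_integral do rewrite big_cons mulrDl EFinD.
under [X in (_ <= _ * X)%E]eq_integral do rewrite big_cons EFinD.
rewrite !ge0_integralD//; last 8 first.
- by move=> x _; rewrite lee_fin mulr_ge0.
- exact/measurable_EFinP/measurable_funM.
- by move=> x _; rewrite lee_fin.
- exact/measurable_EFinP.
- by move=> x _; rewrite lee_fin !mulr_ge0.
- exact/measurable_EFinP/measurable_funM/mV/measurable_funM.
- by move=> x _; rewrite lee_fin mulr_ge0.
- exact/measurable_EFinP/measurable_funM.
rewrite ge0_muleDr; last 2 first.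
- by apply: integral_ge0 => x _; rewrite lee_fin mulr_ge0.
- by apply: integral_ge0 => x _; rewrite lee_fin.
by rewrite leeD// cond_mean_le_indic.
Qed.

Section dyadic_approximation.
Variable Z : Om -> R.
Hypotheses (Z0 : forall x, 0 <= Z x) (GZ : G_measurable G Z).

Let f := EFin \o Z.

(* [approx setT f n] as a single weighted sum of indicators: [Some k] indexes
   the dyadic level sets, [None] the set where [Z] exceeds [n]. *)
Let a n (i : option nat) : R := if i is Some k then k%:R * 2 ^- n else n%:R.
Let A n (i : option nat) : set Om :=
  if i is Some k then dyadic_approx setT f n k else integer_approx setT f n.
Let idx n := None :: map Some (iota 0 (n * 2 ^ n)).

Let GA n i : G (A n i).
Proof.
have G0 : G set0 by case: hG => -[].
case: i => [k|] /=; last first.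
  have -> : integer_approx setT f n = Z @^-1` `[n%:R, +oo[.
    by apply/seteqP; split => x; rewrite /integer_approx /= in_itv /= andbT lee_fin;
      [case | split].
  by apply: GZ; exact: measurable_itv.
rewrite /dyadic_approx; case: ifP => _ //.
have -> : setT `&` [set x | f x \in EFin @` [set` dyadic_itv R n k]] =
          Z @^-1` [set` dyadic_itv R n k].
  apply/seteqP; split => x; rewrite /= inE.
    by move=> [_ [r rI [<-]]].
  by move=> Zx; split => //; exists (Z x).
by apply: GZ; exact: measurable_itv.
Qed.

Let approxE n x : approx setT f n x = \sum_(i <- idx n) a n i * \1_(A n i) x.
Proof.
rewrite /approx /idx big_cons big_map addrC; congr (_ + _).
rewrite -(big_mkord xpredT (fun k => k%:R / 2 ^+ n * \1_(dyadic_approx setT f n k) x)).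
by rewrite /index_iota subn0.
Qed.

Let approx_ge0 n x : 0 <= approx setT f n x.
Proof.
rewrite approxE; apply: sumr_ge0 => -[k|] _; apply: mulr_ge0;
  by rewrite /= ?indicE ?divr_ge0 ?exprn_ge0.
Qed.

Let measurable_approx n : measurable_fun setT (approx setT f n).
Proof.
rewrite (_ : approx setT f n = fun x => \sum_(i <- idx n) a n i * \1_(A n i) x).
  apply: measurable_sum => i; apply: measurable_funM => //.
  exact/measurable_indic/(sub_sigma_algebra_measurable hG).
by apply/funext => x; exact: approxE.
Qed.

Let approx_bound n :
  (\int[mu]_x (approx setT f n x * V x)%:E <= c%:E * \int[mu]_x (Z x)%:E)%E.
Proof.
under eq_integral do rewrite approxE.
have a0 i : 0 <= a n i by case: i => [k|] /=; rewrite ?divr_ge0 ?exprn_ge0.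
apply: le_trans (cond_mean_le_sum_indic (idx n) a0 (GA n)) _.
rewrite lee_wpmul2l ?lee_fin//.
under eq_integral do rewrite -approxE.
apply: ge0_le_integral => //.
- by move=> x _; rewrite lee_fin.
- exact/measurable_EFinP.
- exact/measurable_EFinP/(G_measurable_measurable_fun hG).
- by move=> x _; apply: le_approx => // y _; rewrite lee_fin.
Qed.

Lemma cond_mean_le_mul :
  (\int[mu]_x (Z x * V x)%:E <= c%:E * \int[mu]_x (Z x)%:E)%E.
Proof.
pose g n x := (approx setT f n x * V x)%:E.
have mZ := G_measurable_measurable_fun hG GZ.
have mg n : measurable_fun setT (g n).
  exact/measurable_EFinP/measurable_funM.
have g0 n x : setT x -> (0 <= g n x)%E by move=> _; rewrite lee_fin mulr_ge0.
have ndg x : setT x -> {homo g^~ x : n m / (n <= m)%N >-> (n <= m)%E}.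
  move=> _ n m nm; rewrite lee_fin ler_wpM2r//.
  by have /lefP := nd_approx setT f nm; apply.
have limg x : limn (g^~ x) = (Z x * V x)%:E.
  apply: (cvg_lim (@ereal_hausdorff R)); apply: cvg_EFin; first exact: nearW.
  apply: cvgMr_tmp; apply: cvg_approx => //; last exact: ltry.
  by move=> y _; rewrite lee_fin.
have -> : (\int[mu]_x (Z x * V x)%:E = \int[mu]_x limn (g^~ x))%E.
  by apply: eq_integral => x _; rewrite limg.
rewrite monotone_convergence//; apply: lime_le.
  exact: cvgP (cvg_monotone_convergence _ _ _ _).
by apply: nearW => n; exact: approx_bound.
Qed.

End dyadic_approximation.

(* Off the gate [A] the factor is [1 <= c]. *)
Lemma cond_mean_le_gated (Q : Om -> R) (A : set Om) : 1 <= c ->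
  (forall x, 0 <= Q x) -> G_measurable G Q -> G A ->
  (\int[mu]_x (Q x * (\1_A x * V x + (1 - \1_A x)))%:E
     <= c%:E * \int[mu]_x (Q x)%:E)%E.
Proof.
move=> c1 Q0 GQ GA.
have mQ := G_measurable_measurable_fun hG GQ.
have mi : measurable_fun setT (\1_A : Om -> R).
  exact/measurable_indic/(sub_sigma_algebra_measurable hG).
have i0 x : 0 <= \1_A x :> R by rewrite indicE; case: (x \in A).
have i1 x : 0 <= 1 - \1_A x :> R.
  by rewrite indicE; case: (x \in A); rewrite /= ?subrr ?subr0.
have m1i : measurable_fun setT (fun x => 1 - \1_A x : R).
  exact/measurable_funB/mi/measurable_cst.
have splitQ : (\int[mu]_x (Q x)%:E = \int[mu]_x (Q x * \1_A x)%:E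
                                   + \int[mu]_x (Q x * (1 - \1_A x))%:E)%E.
  rewrite -ge0_integralD//; first last.
  - exact/measurable_EFinP/measurable_funM.
  - by move=> x _; rewrite lee_fin mulr_ge0.
  - exact/measurable_EFinP/measurable_funM.
  - by move=> x _; rewrite lee_fin mulr_ge0.
  by apply: eq_integral => x _; rewrite -EFinD -mulrDr addrC subrK mulr1.
under eq_integral do rewrite mulrDr mulrA EFinD.
rewrite ge0_integralD//; first last.
- exact/measurable_EFinP/measurable_funM.
- by move=> x _; rewrite lee_fin mulr_ge0.
- exact/measurable_EFinP/measurable_funM/mV/measurable_funM.
- by move=> x _; rewrite lee_fin !mulr_ge0.
rewrite splitQ ge0_muleDr; first last.
- by apply: integral_ge0 => x _; rewrite lee_fin mulr_ge0.
- by apply: integral_ge0 => x _; rewrite lee_fin mulr_ge0.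
apply: leeD.
  apply: cond_mean_le_mul => [x|]; first by rewrite mulr_ge0.
  exact (G_measurableM hG GQ (G_measurable_indic hG GA)).
rewrite lee_pemull ?lee_fin//.
by apply: integral_ge0 => x _; rewrite lee_fin mulr_ge0.
Qed.

End cond_mean_le.

Lemma cond_exp_version_mean_le d (Om : measurableType d) (R : realType)
    (P : probability Om R) (G : set (set Om)) (V g : Om -> R) (c : R) :
  Defs.sub_sigma_algebra G -> 0 <= c -> cond_exp_version P G V g ->
  {ae P, forall w, g w <= c} -> cond_mean_le P G V c.
Proof.
move=> hG c0 [Gg _ _ intE] gc B GB; rewrite -intE//.
apply: integral_ae_le_cst => //; first exact: sub_sigma_algebra_measurable GB.
exact: G_measurable_measurable_fun Gg.
Qed.

Section predictable_sum.
Context d (Om : measurableType d) (R : realType) (P : probability Om R).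
Variables (F : nat -> set (set Om)) (Y : nat -> Om -> R) (A : nat -> set Om).
Hypotheses (hF : filtration F) (hY : forall u, G_measurable (F u.+1) (Y u)).
Hypothesis hA : forall u, F u (A u).

Definition predictable_sum t x := \sum_(0 <= u < t) \1_(A u) x * Y u x.

Lemma predictable_sumS t x :
  predictable_sum t.+1 x = predictable_sum t x + \1_(A t) x * Y t x.
Proof. by rewrite /predictable_sum big_nat_recr. Qed.

Lemma predictable_sumE t x :
  predictable_sum t x = \sum_(0 <= u < t) (x \in A u)%:R * Y u x.
Proof. by apply: eq_bigr => u _; rewrite indicE. Qed.

Lemma predictable_sum_measurable t : G_measurable (F t) (predictable_sum t).
Proof.
elim: t => [|t IH].
  rewrite (_ : predictable_sum 0 = cst 0); last first.
    by apply/funext => x; rewrite /predictable_sum big_geq.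
  exact: G_measurable_cst (hF.1 0%N) 0.
have FtS := hF.2 _ _ (leqnSn t).
rewrite (_ : predictable_sum t.+1 = predictable_sum t \+ \1_(A t) \* Y t); last first.
  by apply/funext => x; rewrite predictable_sumS.
have gated : G_measurable (F t.+1) (\1_(A t) \* Y t).
  exact (G_measurableM (hF.1 _) (G_measurable_indic (hF.1 _) (FtS _ (hA t))) (hY t)).
exact (G_measurableD (hF.1 _) (G_measurable_sub FtS IH) gated).
Qed.

Variables (lam c : R).
Hypothesis c1 : 1 <= c.
Hypothesis hYc : forall u, exists g, cond_exp_version P (F u)
   (fun w => expR (lam * Y u w)) g /\ {ae P, forall w, g w <= c}.

Lemma G_measurable_expR_predictable_sum t :
  G_measurable (F t) (fun x => expR (lam * predictable_sum t x)).
Proof.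
have G_lamS := G_measurableM (hF.1 t) (G_measurable_cst (hF.1 t) lam)
  (predictable_sum_measurable t).
exact (G_measurable_expR (hF.1 t) G_lamS).
Qed.

Lemma expR_predictable_sum_integral_le t :
  (\int[P]_x (expR (lam * predictable_sum t x))%:E <= (c ^+ t)%:E)%E.
Proof.
elim: t => [|t IH].
  under eq_integral do rewrite /predictable_sum big_geq// mulr0 expR0.
  by rewrite integral_cst// mul1e expr0 probability_le1.
have [g [hg gc]] := hYc t.
have c0 : 0 <= c by apply: le_trans c1.
have hV := cond_exp_version_mean_le (hF.1 t) c0 hg gc.
have mV : measurable_fun setT (fun w => expR (lam * Y t w)).
  exact (G_measurable_measurable_fun (hF.1 _) (G_measurable_expR (hF.1 _)
    (G_measurableM (hF.1 _) (G_measurable_cst (hF.1 _) lam) (hY t)))).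
under eq_integral => x _ do rewrite predictable_sumS mulrDr expRD.
rewrite (eq_integral (fun x => (expR (lam * predictable_sum t x) *
   (\1_(A t) x * expR (lam * Y t x) + (1 - \1_(A t) x)))%:E)); last first.
  move=> x _; congr (_ * _)%:E; rewrite indicE.
  by case: (x \in A t); rewrite /= ?(mul1r, mul0r, subrr, subr0, addr0, add0r, mulr0, expR0).
apply: le_trans (cond_mean_le_gated (hF.1 t) c0 _ mV hV c1 _ _ (hA t)) _.
- by move=> x; exact: expR_ge0.
- by move=> x; exact: expR_ge0.
- exact: G_measurable_expR_predictable_sum.
by rewrite exprS EFinM lee_wpmul2l ?lee_fin.
Qed.

Lemma predictable_sum_tail_le (E : set Om) (z : R) (T : nat) :
  0 <= lam -> measurable E -> (forall w, E w -> z <= predictable_sum T w) ->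
  (P E <= (expR (- (lam * z)) * c ^+ T)%:E)%E.
Proof.
move=> lam0 mE hE.
have mS := G_measurable_measurable_fun (hF.1 T) (G_measurable_expR_predictable_sum T).
have markov : ((expR (lam * z))%:E * P E <= (c ^+ T)%:E)%E.
  apply: le_trans (expR_predictable_sum_integral_le T).
  rewrite (_ : P E = \int[P]_x (\1_E x)%:E)%E; last first.
    by rewrite integral_indic// setIT.
  rewrite -ge0_integralZl_EFin//; last first.
    exact/measurable_EFinP/measurable_indic.
  apply: ge0_le_integral => //.
  - rewrite (_ : (fun x => _) = EFin \o (fun x => expR (lam * z) * \1_E x)).
      exact/measurable_EFinP/measurable_funM/measurable_indic/mE/measurable_cst.
    by apply/funext => x; rewrite /= EFinM.
  - exact/measurable_EFinP.
  - move=> x _; rewrite -EFinM indicE; case: (boolP (x \in E)) => xE.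
      by rewrite mulr1 lee_fin ler_expR ler_wpM2l// hE//; rewrite inE in xE.
    by rewrite mulr0 lee_fin expR_ge0.
rewrite -[P E]mul1e -(expR0 R) -(addNr (lam * z)) expRD EFinM -muleA EFinM.
by rewrite lee_wpmul2l ?lee_fin ?expR_ge0.
Qed.

End predictable_sum.

(* For [s = 0] the optimiser [z / (sT + zD/3) = 3/D] is not admissible;
   [lam = 3/(2D)] then attains the same value. *)
Lemma bernstein_lambda_exists (R : realType) (z s D T : R) :
  0 < z -> 0 <= s -> 0 <= D -> 0 < T -> 0 < s * T + z * D / 3 ->
  exists lam, [/\ 0 <= lam, lam * D < 3 &
   - (lam * z) + (lam ^+ 2 * s / 2) / (1 - lam * D / 3) * T
     <= - ((z ^+ 2 / 2) / (s * T + z * D / 3))].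
Proof.
move=> z0 s0 D0 T0 den0.
have [s_eq0 | s_neq0] := eqVneq s 0.
  rewrite s_eq0 in den0 *.
  have Dp : 0 < D.
    rewrite lt_neqAle D0 andbT eq_sym; apply/eqP => D_eq0.
    by move: den0; rewrite D_eq0 !(mulr0, mul0r, addr0) ltxx.
  exists (3 / (2 * D)); split.
  - by rewrite divr_ge0// mulr_ge0.
  - have -> : 3 / (2 * D) * D = 3 / 2 by field; rewrite gt_eqF.
    lra.
  - by rewrite le_eqVlt; apply/orP; left; apply/eqP; field; rewrite !gt_eqF.
have sp : 0 < s by rewrite lt_neqAle eq_sym s_neq0 s0.
have sT : 0 < s * T by rewrite mulr_gt0.
exists (z / (s * T + z * D / 3)); split.
- by rewrite divr_ge0// ltW.
- by rewrite mulrAC ltr_pdivrMr//; lra.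
- rewrite le_eqVlt; apply/orP; left; apply/eqP.
  by field; apply/andP; split; rewrite gt_eqF//; lra.
Qed.

(* Once a partial sum reaches [z] the gate closes for good, freezing the gated
   sum at that partial sum. *)
Lemma gated_sum_ge_threshold (R : realType) (y : nat -> R) (b : nat -> bool)
    (z : R) (T : nat) : 0 < z ->
  (forall u, b u <-> (forall v, (v <= u)%N -> \sum_(0 <= k < v) y k < z)) ->
  (exists2 t0, (t0 <= T)%N & z <= \sum_(0 <= k < t0) y k) ->
  z <= \sum_(0 <= u < T) (b u)%:R * y u.
Proof.
move=> z0 hb [t0 t0T zt0].
pose S v := \sum_(0 <= k < v) y k.
pose S' t := \sum_(0 <= u < t) (b u)%:R * y u.
have inv t : (b t /\ S' t = S t) \/ (z <= S' t /\ ~~ b t).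
  elim: t => [|t [[bt e]|[zt nbt]]].
  - left; split; last by rewrite /S' /S !big_geq.
    by apply/hb => v; rewrite leqn0 => /eqP ->; rewrite big_geq.
  - have e1 : S' t.+1 = S t.+1.
      by rewrite /S' /S !big_nat_recr//= -/(S' t) -/(S t) e bt mul1r.
    have [lt|ge] := ltP (S t.+1) z.
      left; split => //; apply/hb => v; rewrite leq_eqVlt => /orP[/eqP ->//|].
      by rewrite ltnS => /(proj1 (hb t) bt).
    right; split; first by rewrite e1.
    by apply/negP => /hb /(_ t.+1 (leqnn _)); rewrite ltNge ge.
  - right; split.
      by rewrite /S' big_nat_recr//= -/(S' t) (negbTE nbt) mul0r addr0.
    apply/negP => /hb h; move/negP: nbt; apply; apply/hb => v vt.
    by apply: h; rewrite (leq_trans vt).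
case: (inv T) => [[bT _]|[] //].
by have := proj1 (hb T) bT t0 t0T; rewrite ltNge zt0.
Qed.

Section drift_increments.
Context d (Om : measurableType d) (R : realType) (P : probability Om R)
  (F : nat -> set (set Om)) (X : nat -> Om -> R) (tau : Om -> option nat)
  (D s Rd : R).
Hypotheses (hF : filtration F) (hX : adapted F X) (hST : stopping_time F tau).
Hypotheses (D0 : 0 <= D) (s0 : 0 <= s).
Hypothesis hC2 : forall t : nat, cond_bernstein_onesided P (F t) D s
  (fun w => (tlt t (tau w))%:R * (X t.+1 w - X t w - Rd)).

Definition drift_incr u w := (tlt u (tau w))%:R * (X u.+1 w - X u w - Rd).

Lemma stopping_time_gt t : F t [set w | tlt t (tau w)].
Proof.
have [_ FC _] := (hF.1 t).1.
have := FC _ (hST t); congr (F t); apply/seteqP; split => w /=.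
  by move=> [_ /negP]; rewrite negbK.
by move=> h; split => //; rewrite h.
Qed.

Lemma drift_incr_measurable u : G_measurable (F u.+1) (drift_incr u).
Proof.
have FuS := hF.2 _ _ (leqnSn u).
have hFS := hF.1 u.+1.
have alive : (fun w => (tlt u (tau w))%:R) = \1_[set w | tlt u (tau w)] :> (Om -> R).
  by apply/funext => w; rewrite indicE mem_setE.
have G_alive := G_measurable_indic (R:=R) hFS (FuS _ (stopping_time_gt u)).
rewrite -alive in G_alive.
have G_step := G_measurableB hFS
  (G_measurableB hFS (hX u.+1) (G_measurable_sub FuS (hX u))) (G_measurable_cst hFS Rd).
exact (G_measurableM hFS G_alive G_step).
Qed.

Lemma stopping_time_ge t : F t [set w | tle t (tau w)].
Proof.
case: t => [|t].
  rewrite (_ : [set w | _] = setT); first exact: sub_sigma_algebraT (hF.1 0%N).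
  by apply/seteqP; split => w //= _; case: (tau w).
rewrite (_ : [set w | _] = [set w | tlt t (tau w)]); last first.
  by apply/seteqP; split => w /=; case: (tau w).
exact/(hF.2 _ _ (leqnSn t))/stopping_time_gt.
Qed.

Lemma adapted_increment_preimage t (B : set R) : measurable B ->
  F t ((X t \- X 0%N) @^-1` B).
Proof.
move=> mB; have X0t := G_measurable_sub (hF.2 _ _ (leq0n t)) (hX 0%N).
exact (G_measurableB (hF.1 t) (hX t) X0t mB).
Qed.

Definition drift_sum := predictable_sum drift_incr (fun _ => setT).

Lemma drift_sumE t w : drift_sum t w = \sum_(0 <= u < t) drift_incr u w.
Proof. by apply: eq_bigr => u _; rewrite indicT mul1r. Qed.

Lemma drift_sum_before_tau w t : (forall u, (u < t)%N -> tlt u (tau w)) ->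
  drift_sum t w = X t w - X 0%N w - t%:R * Rd.
Proof.
move=> h; rewrite drift_sumE.
rewrite (@eq_big_nat _ _ _ _ _ _ (fun u => (X u.+1 w - X u w) - Rd)).
  by rewrite sumrB telescope_sumr// sumr_const_nat subn0 mulr_natl.
by move=> u /andP[_ ut]; rewrite /drift_incr (h u ut) mul1r.
Qed.

Definition below_threshold (z : R) u :=
  [set w | forall v, (v <= u)%N -> drift_sum v w < z].

Lemma below_threshold_adapted z u : F u (below_threshold z u).
Proof.
rewrite (_ : below_threshold z u =
    \bigcap_(v in [set v | (v <= u)%N]) (drift_sum v @^-1` `]-oo, z[)); last first.
  by apply/seteqP; split => w /= hw v /hw; rewrite /= in_itv.
rewrite -(g_sigma_measurableE (hF.1 u)); apply: bigcap_measurable.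
  by exists 0%N.
move=> v vu; rewrite (g_sigma_measurableE (hF.1 u)); apply: (hF.2 _ _ vu).
have Fv_setT u' : F u' setT := sub_sigma_algebraT (hF.1 u').
exact (predictable_sum_measurable hF drift_incr_measurable Fv_setT v
  (measurable_itv _)).
Qed.

Lemma upcrossing_measurable (h : R) (T : nat) :
  measurable [set w | exists t : nat,
    [/\ (t <= T)%N, tle t (tau w) & (X 0%N w + h <= X t w)%R]].
Proof.
rewrite (_ : [set w | _] = \bigcup_(t in [set t | (t <= T)%N])
    ([set w | tle t (tau w)] `&` (X t \- X 0%N) @^-1` `[h, +oo[)); last first.
  apply/seteqP; split => w /=.
    move=> [t [tT tw hXt]]; exists t => //.
    by split; rewrite //= in_itv /= andbT; lra.
  move=> [t tT [tw]]; rewrite /= in_itv /= andbT => hXt.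
  by exists t; split => //; lra.
apply: bigcup_measurable => t _; apply: (sub_sigma_algebra_measurable (hF.1 t)).
apply: (sub_sigma_algebraI (hF.1 t)); first exact: stopping_time_ge.
exact: adapted_increment_preimage (measurable_itv _).
Qed.

Lemma stay_above_measurable (h : R) (T : nat) :
  measurable [set w | tlt T (tau w) /\
    (forall t : nat, (t <= T)%N -> (X 0%N w - h < X t w)%R)].
Proof.
rewrite (_ : [set w | _] = [set w | tlt T (tau w)] `&`
    \bigcap_(t in [set t | (t <= T)%N]) ((X t \- X 0%N) @^-1` `]-h, +oo[));
  last first.
  apply/seteqP; split => w /= [wT hw]; split => // t tT; have := hw t tT;
    by rewrite /= in_itv /= andbT; lra.
apply: measurableI.
  by apply: (sub_sigma_algebra_measurable (hF.1 T)); exact: stopping_time_gt.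
apply: bigcap_measurable => [|t _]; first by exists 0%N.
apply: (sub_sigma_algebra_measurable (hF.1 t)).
exact: adapted_increment_preimage (measurable_itv _).
Qed.

Lemma freedman_bound (A : nat -> set Om) (E : set Om) (z : R) (T : nat) :
  0 < z -> (0 < T)%N -> (forall u, F u (A u)) -> measurable E ->
  (forall w, E w -> z <= predictable_sum drift_incr A T w) ->
  (P E <= (expR (- ((z ^+ 2 / 2) / (s * T%:R + z * D / 3))))%:E)%E.
Proof.
move=> z0 T0 hA mE hE.
have Tp : 0 < T%:R :> R by rewrite ltr0n.
have [den0|dp] := eqVneq (s * T%:R + z * D / 3) 0.
  by rewrite den0 invr0 mulr0 oppr0 expR0 probability_le1.
have {}dp : 0 < s * T%:R + z * D / 3.
  rewrite lt_neqAle eq_sym dp /=.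
  by have := mulr_ge0 (ltW z0) D0; have := mulr_ge0 s0 (ltW Tp); lra.
have [lam [lam0 lamD hlam]] := bernstein_lambda_exists z0 s0 D0 Tp dp.
set psi := lam ^+ 2 * s / 2 / (1 - lam * D / 3).
have psi0 : 0 <= psi.
  by rewrite /psi !divr_ge0 ?mulr_ge0 ?sqr_ge0// subr_ge0; lra.
have c1 : 1 <= expR psi by rewrite -expR0 ler_expR.
apply: le_trans (predictable_sum_tail_le hF drift_incr_measurable hA c1
  (fun u => hC2 u lam0 lamD) lam0 mE hE) _.
by rewrite lee_fin -expRM_natr -expRD ler_expR.
Qed.

Lemma upcrossing_bound (h : R) (T : nat) : 0 <= Rd -> (0 < T)%N ->
  let z := h - Rd * T%:R in 0 < z ->
  (P [set w | exists t : nat,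
      [/\ (t <= T)%N, tle t (tau w) & (X 0%N w + h <= X t w)%R]]
   <= (expR (- ((z ^+ 2 / 2) / (s * T%:R + z * D / 3)))%R)%:E)%E.
Proof.
move=> Rd0 T0 z z0.
apply: (freedman_bound z0 T0 (below_threshold_adapted z) (upcrossing_measurable h T)).
move=> w [t [tT tw hXt]]; rewrite predictable_sumE.
apply: gated_sum_ge_threshold z0 _ _ => [u|].
  by rewrite inE; split=> hw v /hw; rewrite drift_sumE.
exists t => //.
rewrite -drift_sumE drift_sum_before_tau; last first.
  by move=> u ut; move: tw; case: (tau w) => //= n tn; exact: leq_trans ut tn.
have : t%:R * Rd <= T%:R * Rd by rewrite ler_wpM2r// ler_nat.
by rewrite /z; lra.
Qed.

Lemma stay_above_bound (h : R) (T : nat) : (0 < T)%N ->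
  let z := (- Rd) * T%:R - h in 0 < z ->
  (P [set w | tlt T (tau w) /\
      (forall t : nat, (t <= T)%N -> (X 0%N w - h < X t w)%R)]
   <= (expR (- ((z ^+ 2 / 2) / (s * T%:R + z * D / 3)))%R)%:E)%E.
Proof.
move=> T0 z z0.
apply: (freedman_bound z0 T0 (fun u => sub_sigma_algebraT (hF.1 u))
  (stay_above_measurable h T)).
move=> w [wT hw]; rewrite -/(drift_sum T w) drift_sum_before_tau; last first.
  by move=> u uT; move: wT; case: (tau w) => //= n Tn; exact: ltn_trans uT Tn.
by have := hw T (leqnn T); rewrite /z; lra.
Qed.

End drift_increments.

Theorem lemma3p3 (d : measure_display) (Om : measurableType d) (R : realType)
  (P : probability Om R) (F : nat -> set (set Om)) (X : nat -> Om -> R)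
  (tau : Om -> option nat) (D s Rd : R) :
  filtration F -> adapted F X -> stopping_time F tau ->
  0 <= D -> 0 <= s ->
  (* (C1): for every t >= 1 (written t.+1), conditioned on F_t *)
  (forall t : nat, exists g, cond_exp_version P (F t) (X t.+1) g /\
     {ae P, forall w, (tlt t (tau w))%:R * (g w - X t w - Rd) <= 0}) ->
  (* (C2) *)
  (forall t : nat, cond_bernstein_onesided P (F t) D s
     (fun w => (tlt t (tau w))%:R * (X t.+1 w - X t w - Rd))) ->
  (* (i) *)
  (0 <= Rd -> forall (h : R) (T : nat), 0 < h -> (0 < T)%N ->
     let z := h - Rd * T%:R in 0 < z ->
     (P [set w | exists t : nat, [/\ (t <= T)%N, tle t (tau w) &
                                     (X 0%N w + h <= X t w)%R]]
      <= (expR (- ((z ^+ 2 / 2) / (s * T%:R + z * D / 3)))%R)%:E)%E)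
  /\
  (* (ii) *)
  (Rd < 0 -> forall (h : R) (T : nat), 0 < h -> (0 < T)%N ->
     let z := (- Rd) * T%:R - h in 0 < z ->
     (P [set w | tlt T (tau w) /\ (forall t : nat, (t <= T)%N -> (X 0%N w - h < X t w)%R)]
      <= (expR (- ((z ^+ 2 / 2) / (s * T%:R + z * D / 3)))%R)%:E)%E).
Proof.
move=> hF hX hST D0 s0 _ hC2; split=> [Rd0 h T _ T0 | _ h T _ T0].
- exact (upcrossing_bound hF hX hST D0 s0 hC2 Rd0 T0).
- exact (stay_above_bound hF hX hST D0 s0 hC2 T0).
Qed.
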